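(* Let $A$ be a symmetric general metric space and let $\bar A$ be its Cauchy completion: the general metric space whose points are the closed (equivalently, minimal) Cauchy filters on $A$, with $\bar A(\varphi,\psi)=\lim^-_{y\in\psi}\lim^+_{x\in\varphi}A(x,y)$. Then the $\mathcal P_1$-completion of $A$, i.e. the general metric space whose points are the closed weakly flat filters on $A$ with distance $d(\mathcal F_1,\mathcal F_2)=\lim^+_{x\in\mathcal F_1}\lim^-_{y\in\mathcal F_2}A(x,y)$, is isomorphic to the general metric space whose points are the nonempty closed subsets of $\bar A$ (for the topology of the symmetric pseudometric $\bar A$) with distance $d(X,Y)=\sup_{\varphi\in X}\inf_{\psi\in Y}\bar A(\varphi,\psi)$; the isomorphism sends a closed weakly flat filter $\mathcal F$ to the set of closed Cauchy filters containing $\mathcal F$.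
   Context: A general metric space $A$ is a set with $A(-,-):A\times A\to[0,\infty]$, $A(x,x)=0$, $A(x,z)\le A(x,y)+A(y,z)$; symmetric means $A(x,y)=A(y,x)$. A filter on $A$ is a nonempty set of nonempty subsets closed under finite intersections and supersets; $\lim^+_{\mathcal F}t=\inf_{f\in\mathcal F}\sup_{x\in f}t(x)$, $\lim^-_{\mathcal F}t=\sup_{f\in\mathcal F}\inf_{x\in f}t(x)$ ($\inf\emptyset=\infty$, $\sup\emptyset=0$); $M^-(\mathcal F)(x)=\lim^-_{y\in\mathcal F}A(x,y)$. Cauchy: $\inf_f\sup_{x,y\in f}A(x,y)=0$. Weakly flat: $\lim^+_{\mathcal F}M^-(\mathcal F)=0$. A weakly flat filter $\mathcal F$ is closed iff for every $f\in\mathcal F$ there is $\epsilon>0$ with $\{x:M^-(\mathcal F)(x)\le\epsilon\}\subseteq f$. Two general metric spaces are isomorphic if there is a bijection preserving distances. *)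

From mathcomp Require Import all_boot all_order all_algebra.
From mathcomp Require Import all_classical all_reals all_analysis.
Set Implicit Arguments. Unset Strict Implicit. Unset Printing Implicit Defensive.
Import Order.TTheory GRing.Theory Num.Theory.
Local Open Scope classical_set_scope.
Local Open Scope ring_scope.
Local Open Scope ereal_scope.

Section GMS.
Variables (R : realType) (A : Type).

Definition gfilter (F : set (set A)) : Prop :=
  [/\ F !=set0, (forall f, F f -> f !=set0),
      (forall f g, F f -> F g -> F (f `&` g)) &
      (forall f g, F f -> f `<=` g -> F g)].

Definition limp (F : set (set A)) (t : A -> \bar R) : \bar R :=
  ereal_inf [set ereal_sup (t @` f) | f in F].
Definition limm (F : set (set A)) (t : A -> \bar R) : \bar R :=
  ereal_sup [set ereal_inf (t @` f) | f in F].

Variable d : A -> A -> \bar R.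

Definition Mminus (F : set (set A)) (x : A) : \bar R := limm F (fun y => d x y).

Definition cauchy (F : set (set A)) : Prop :=
  ereal_inf [set ereal_sup [set d p.1 p.2 | p in f `*` f] | f in F] = 0.

Definition weakly_flat (F : set (set A)) : Prop := limp F (Mminus F) = 0.

Definition closed_filter (F : set (set A)) : Prop :=
  forall f, F f -> exists2 e : R, (0 < e)%R & [set x | Mminus F x <= e%:E] `<=` f.

Definition CF := {phi : set (set A) | [/\ gfilter phi, cauchy phi & closed_filter phi]}.

Definition dbar (phi psi : CF) : \bar R :=
  limm (sval psi) (fun y => limp (sval phi) (fun x => d x y)).

Definition P1pt := {F : set (set A) | [/\ gfilter F, weakly_flat F & closed_filter F]}.

Definition dP1 (F G : P1pt) : \bar R :=
  limp (sval F) (fun x => limm (sval G) (fun y => d x y)).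

Definition dbar_closed (X : set CF) : Prop :=
  forall phi : CF,
    (forall e : R, (0 < e)%R -> exists2 psi, X psi & dbar phi psi < e%:E) -> X phi.

Definition ClSet := {X : set CF | X !=set0 /\ dbar_closed X}.

Definition dCl (X Y : ClSet) : \bar R :=
  ereal_sup [set ereal_inf [set dbar phi psi | psi in sval Y] | phi in sval X].

End GMS.

From Pilot Require Import Defs.
From mathcomp Require Import all_boot all_order all_algebra.
From mathcomp Require Import all_classical all_reals all_analysis.
From mathcomp Require Import lra.
Set Implicit Arguments. Unset Strict Implicit. Unset Printing Implicit Defensive.
Import Order.TTheory GRing.Theory Num.Theory.
Local Open Scope classical_set_scope.
Local Open Scope ring_scope.
Local Open Scope ereal_scope.

(* A closed weakly flat filter [F] is determined by its distance function
   [M F = M^-(F)]: these functions are exactly the potentials (nonnegative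
   1-Lipschitz functions [m] such that every [x] lies within [m x + e] of a
   point where [m <= e]), [F] is the filter of sublevel sets of [M F], and
   inclusion of filters is pointwise comparison of potentials.  Cauchy filters
   correspond to the potentials that moreover satisfy [d x y <= m x + m y].
   The key step is that every potential is the pointwise infimum of the Cauchy
   potentials above it: following a chain of points where [m] is almost zero,
   starting close to [x], yields a Cauchy sequence whose potential dominates
   [m] and exceeds [m x] by at most [e].  Hence [F] is the sublevel filter of
   the infimum over its Cauchy refinements, a closed set [X] of Cauchy filters
   is the set of refinements of the sublevel filter of the infimum over [X],
   and the same approximation computes the excess distance. *)

Section ErealImage.
Variables (R : realType) (T : Type).
Implicit Types (f : set T) (t : T -> \bar R) (a c : \bar R).

Lemma ereal_inf_img_lbound f t x : f x -> ereal_inf (t @` f) <= t x.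
Proof. by move=> fx; apply: ereal_inf_lbound; exists x. Qed.

Lemma ereal_inf_img_glb f t c :
  (forall x, f x -> c <= t x) -> c <= ereal_inf (t @` f).
Proof. by move=> tc; apply: le_ereal_inf_tmp => _ [x fx <-]; apply: tc. Qed.

Lemma ereal_sup_img_ubound f t x : f x -> t x <= ereal_sup (t @` f).
Proof. by move=> fx; apply: ereal_sup_ubound; exists x. Qed.

Lemma ereal_sup_img_lub f t c :
  (forall x, f x -> t x <= c) -> ereal_sup (t @` f) <= c.
Proof. by move=> tc; apply: ge_ereal_sup => _ [x fx <-]; apply: tc. Qed.

Lemma lee_adde_ereal_inf_img f t a c : 0 <= c -> (forall x, f x -> 0 <= t x) ->
  (forall x, f x -> a <= c + t x) -> a <= c + ereal_inf (t @` f).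
Proof.
move=> c0 t0 act; case: c c0 act => [r| |] // c0 act.
- rewrite -leeBlDl //; apply: ereal_inf_img_glb => x fx; rewrite leeBlDl //.
  exact: act.
- have inf0 : 0 <= ereal_inf (t @` f) by apply: ereal_inf_img_glb.
  by rewrite addye ?leey // gt_eqF // (lt_le_trans _ inf0) // ltNy0.
Qed.

Lemma ereal_inf_img_approx f t c (e : R) : f !=set0 -> 0 <= c ->
  ereal_inf (t @` f) <= c -> (0 < e)%R -> exists2 x, f x & t x <= c + e%:E.
Proof.
move=> [x0 fx0] + + e0; case: c => [r| |] // _ infc.
- have : ereal_inf (t @` f) < (r + e)%:E by rewrite (le_lt_trans infc) ?lte_fin ?ltrDl.
  by case/ereal_inf_lt => _ [x fx <-] lt; exists x; rewrite // ltW.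
- by exists x0; rewrite // addye ?leey.
Qed.

End ErealImage.

Lemma geometric_eventually_le (R : realType) (e eps : R) : (0 < e)%R -> (0 < eps)%R ->
  exists N, forall k, (N <= k)%N -> (e / 2 ^+ k <= eps)%R.
Proof.
move=> e0 eps0; have epse : (0 < eps / e)%R by rewrite divr_gt0.
have [N _ small] := near_infty_natSinv_expn_lt (PosNum epse).
exists N => k /small /= /ltW; rewrite mul1r -(ler_pM2l e0) mulrCA divff ?gt_eqF //.
by rewrite mulr1.
Qed.

Section FilterLimits.
Variables (R : realType) (A : Type) (F : set (set A)).
Hypothesis gF : gfilter F.
Implicit Type t : A -> \bar R.

Lemma limm_ge0 t : (forall x, 0 <= t x) -> 0 <= limm F t.
Proof.
have [[f Ff] _ _ _] := gF => t0.
apply: le_trans (ereal_sup_img_ubound (fun f => ereal_inf (t @` f)) Ff).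
exact: ereal_inf_img_glb.
Qed.

Lemma limp_ge0 t : (forall x, 0 <= t x) -> 0 <= limp F t.
Proof.
have [_ ne _ _] := gF => t0; apply: ereal_inf_img_glb => f Ff.
by have [x fx] := ne _ Ff; exact: le_trans (t0 x) (ereal_sup_img_ubound _ fx).
Qed.

End FilterLimits.

Section Potentials.
Variables (R : realType) (A : Type) (d : A -> A -> \bar R).
Hypothesis d_ge0 : forall x y, 0 <= d x y.
Hypothesis d_refl : forall x, d x x = 0.
Hypothesis d_tri : forall x y z, d x z <= d x y + d y z.
Hypothesis d_sym : forall x y, d x y = d y x.

Local Notation M := (Mminus d).

Definition closed_wflat (F : set (set A)) :=
  [/\ gfilter F, weakly_flat d F & closed_filter d F].

Lemma Mminus_ge0 F x : gfilter F -> 0 <= M F x.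
Proof. by move=> gF; apply: limm_ge0. Qed.

Lemma Mminus_lipschitz F x y : gfilter F -> M F x <= d x y + M F y.
Proof.
move=> gF; apply: ereal_sup_img_lub => f Ff.
apply: le_trans (leeD2l _ (ereal_sup_img_ubound (fun f => ereal_inf (d y @` f)) Ff)).
apply: lee_adde_ereal_inf_img => // z fz.
exact: le_trans (ereal_inf_img_lbound _ fz) (d_tri x y z).
Qed.

Lemma weakly_flat_sublevel F (e : R) : gfilter F -> weakly_flat d F -> (0 < e)%R ->
  F [set x | M F x <= e%:E].
Proof.
move=> [_ _ _ supF] wF e0.
have : limp F (M F) < e%:E by rewrite wF lte_fin.
case/ereal_inf_lt => _ [f Ff <-] lt; apply: (supF f) => // x fx /=.
exact: le_trans (ereal_sup_img_ubound _ fx) (ltW lt).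
Qed.

Definition potential (m : A -> \bar R) :=
  [/\ (forall x, 0 <= m x), (forall x y, m x <= d x y + m y),
      (forall e : R, (0 < e)%R -> exists y, m y <= e%:E) &
      (forall x (e : R), (0 < e)%R -> exists y, m y <= e%:E /\ d x y <= m x + e%:E)].

Lemma potential_approx m x (e e' : R) : potential m -> (0 < e)%R -> (0 < e')%R ->
  exists y, m y <= e%:E /\ d x y <= m x + e'%:E.
Proof.
case=> _ _ _ approx e0 e'0; have [|y [my dxy]] := approx x (Num.min e e').
  by rewrite lt_min e0 e'0.
exists y; split; first by rewrite (le_trans my) // lee_fin ge_min lexx.
by rewrite (le_trans dxy) // leeD2l // lee_fin ge_min lexx orbT.
Qed.

Lemma potential_Mminus F : gfilter F -> weakly_flat d F -> potential (M F).
Proof.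
move=> gF wF; have [_ ne _ _] := gF.
split=> [x|x y|e e0|x e e0]; [exact: Mminus_ge0 | exact: Mminus_lipschitz | |].
- by have [y] := ne _ (weakly_flat_sublevel gF wF e0); exists y.
- have Fe := weakly_flat_sublevel gF wF e0.
  have infx := ereal_sup_img_ubound (fun f => ereal_inf (d x @` f)) Fe.
  have [y my dxy] := ereal_inf_img_approx (ne _ Fe) (Mminus_ge0 x gF) infx e0.
  by exists y.
Qed.

Definition sublevel_filter (m : A -> \bar R) : set (set A) :=
  [set f | exists2 e : R, (0 < e)%R & [set x | m x <= e%:E] `<=` f].

Lemma Mminus_sublevel_filter m x : potential m -> M (sublevel_filter m) x = m x.
Proof.
move=> pm; have [m0 mL _ _] := pm; apply/eqP; rewrite eq_le; apply/andP; split.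
- apply: ereal_sup_img_lub => f [e e0 sf]; apply/lee_addgt0Pr => e' e'0.
  have [y [my dxy]] := potential_approx x pm e0 e'0.
  exact: le_trans (ereal_inf_img_lbound _ (sf _ my)) dxy.
- apply/lee_addgt0Pr => e e0.
  have Fe : sublevel_filter m [set y | m y <= e%:E] by exists e.
  apply: le_trans
    (leeD2r _ (ereal_sup_img_ubound (fun f => ereal_inf (d x @` f)) Fe)).
  rewrite addeC; apply: lee_adde_ereal_inf_img => [|//|y my].
    by rewrite lee_fin ltW.
  by rewrite addeC; exact: le_trans (mL x y) (leeD2l _ my).
Qed.

Lemma sublevel_filter_gfilter m : potential m -> gfilter (sublevel_filter m).
Proof.
case=> _ _ small _; split.
- by exists setT, 1%R.
- by move=> f [e e0 sf]; have [y my] := small e e0; exists y; apply: sf.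
- move=> f g [e e0 sf] [e' e'0 sg]; exists (Num.min e e').
    by rewrite lt_min e0 e'0.
  move=> y /= my; split.
    by apply: sf; rewrite /= (le_trans my) // lee_fin ge_min lexx.
  by apply: sg; rewrite /= (le_trans my) // lee_fin ge_min lexx orbT.
- by move=> f g [e e0 sf] fg; exists e => //; apply: subset_trans fg.
Qed.

Lemma sublevel_filter_closed_wflat m : potential m ->
  closed_wflat (sublevel_filter m).
Proof.
move=> pm; have gF := sublevel_filter_gfilter pm; split => //.
- apply/eqP; rewrite eq_le limp_ge0 ?andbT //; last by move=> x; apply: Mminus_ge0.
  apply/lee_addgt0Pr => e e0; rewrite add0e.
  have Fe : sublevel_filter m [set y | m y <= e%:E] by exists e.
  apply: le_trans (ereal_inf_img_lbound _ Fe) _.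
  by apply: ereal_sup_img_lub => y my; rewrite Mminus_sublevel_filter.
- move=> f [e e0 sf]; exists e => // y /=.
  by rewrite Mminus_sublevel_filter //; apply: sf.
Qed.

Lemma sublevel_filter_Mminus F : closed_wflat F -> sublevel_filter (M F) = F.
Proof.
case=> gF wF cF; apply/seteqP; split=> f; last by case/cF=> e e0 sf; exists e.
case=> e e0 sf; have [_ _ _ supF] := gF.
exact: supF (weakly_flat_sublevel gF wF e0) sf.
Qed.

Lemma subset_MminusP F G : closed_wflat F -> closed_wflat G ->
  F `<=` G <-> forall x, M F x <= M G x.
Proof.
move=> [gF wF cF] [gG wG cG]; split=> [FG x|MFG f Ff].
- apply/lee_addgt0Pr => e e0; have e20 : (0 < e / 2)%R by rewrite divr_gt0.
  have [e' e'0 sG] := cG _ (FG _ (weakly_flat_sublevel gF wF e20)).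
  have [y [My dxy]] := potential_approx x (potential_Mminus gG wG) e'0 e20.
  apply: le_trans (Mminus_lipschitz x y gF) _.
  apply: le_trans (leeD dxy (sG _ My)) _.
  by rewrite -addeA -EFinD -splitr.
- have [e e0 sf] := cF f Ff; have [_ _ _ supG] := gG.
  apply: supG (weakly_flat_sublevel gG wG e0) _ => y /= My.
  by apply: sf; rewrite /= (le_trans (MFG y) My).
Qed.

Lemma cauchy_diam_lt F (e : R) : Defs.cauchy d F -> (0 < e)%R ->
  exists2 f, F f & forall x y, f x -> f y -> d x y < e%:E.
Proof.
move=> cF e0; have : ereal_inf [set ereal_sup [set d p.1 p.2 | p in f `*` f] | f in F]
    < e%:E by rewrite cF lte_fin.
case/ereal_inf_lt => _ [f Ff <-] lt; exists f => // x y fx fy.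
apply: le_lt_trans lt.
exact: (ereal_sup_img_ubound (fun p => d p.1 p.2) (_ : (f `*` f) (x, y))).
Qed.

Lemma cauchy_weakly_flat F : gfilter F -> Defs.cauchy d F -> weakly_flat d F.
Proof.
move=> gF cF; have [_ ne capF _] := gF.
apply/eqP; rewrite eq_le limp_ge0 ?andbT //; last by move=> x; apply: Mminus_ge0.
apply/lee_addgt0Pr => e e0; rewrite add0e.
have [f Ff small] := cauchy_diam_lt cF e0.
apply: le_trans (ereal_inf_img_lbound _ Ff) _.
apply: ereal_sup_img_lub => x fx; apply: ereal_sup_img_lub => g Fg.
have [z [gz fz]] := ne _ (capF _ _ Fg Ff).
exact: le_trans (ereal_inf_img_lbound _ gz) (ltW (small _ _ fx fz)).
Qed.

Lemma cauchy_dist_le F x y : gfilter F -> Defs.cauchy d F ->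
  d x y <= M F x + M F y.
Proof.
move=> gF cF; have [_ ne _ _] := gF; apply/lee_addgt0Pr => e e0.
have e30 : (0 < e / 3)%R by rewrite divr_gt0.
have [f Ff small] := cauchy_diam_lt cF e30.
have inf_le z := ereal_sup_img_ubound (fun f => ereal_inf (d z @` f)) Ff.
have [z fz dxz] := ereal_inf_img_approx (ne _ Ff) (Mminus_ge0 x gF) (inf_le x) e30.
have [z' fz' dyz'] := ereal_inf_img_approx (ne _ Ff) (Mminus_ge0 y gF) (inf_le y) e30.
apply: le_trans (d_tri x z y) _; apply: le_trans (leeD2l _ (d_tri z z' y)) _.
rewrite (d_sym z' y); apply: le_trans (leeD dxz (leeD (ltW (small _ _ fz fz')) dyz')) _.
rewrite [e in _ <= _ + e%:E](_ : e = e / 3 + e / 3 + e / 3)%R; last by lra.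
set a := (e / 3)%:E; rewrite !EFinD -/a -!addeA leeD2l //.
by rewrite (addeCA a (M F y)) (addeCA a (M F y) (a + a)).
Qed.

Lemma sublevel_filter_cauchy m : potential m -> (forall x y, d x y <= m x + m y) ->
  Defs.cauchy d (sublevel_filter m).
Proof.
move=> pm dm; have [_ ne _ _] := sublevel_filter_gfilter pm.
apply/eqP; rewrite eq_le; apply/andP; split; last first.
  apply: ereal_inf_img_glb => f Ff; have [y fy] := ne _ Ff.
  exact: le_trans (ereal_sup_img_ubound (fun p => d p.1 p.2) (_ : (f `*` f) (y, y))).
apply/lee_addgt0Pr => e e0; rewrite add0e; have e20 : (0 < e / 2)%R by rewrite divr_gt0.
have Fe : sublevel_filter m [set y | m y <= (e / 2)%:E] by exists (e / 2)%R.
apply: le_trans (ereal_inf_img_lbound _ Fe) _.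
apply: ereal_sup_img_lub => -[y z] [/= my mz]; apply: le_trans (dm y z) _.
by rewrite [e in _ <= e%:E]splitr EFinD leeD.
Qed.

Lemma CF_closed_wflat (phi : CF d) : closed_wflat (sval phi).
Proof. by case: phi => F [gF cF clF]; split => //; apply: cauchy_weakly_flat. Qed.

Lemma CF_dist_le (phi : CF d) x y : d x y <= M (sval phi) x + M (sval phi) y.
Proof. by case: phi => F [gF cF clF]; apply: cauchy_dist_le. Qed.

Lemma limp_dist_CF (phi : CF d) y :
  limp (sval phi) (fun x => d x y) = M (sval phi) y.
Proof.
have [gF wF _] := CF_closed_wflat phi; have [_ ne capF _] := gF.
apply/eqP; rewrite eq_le; apply/andP; split.
- apply/lee_addgt0Pr => e e0; have Fe := weakly_flat_sublevel gF wF e0.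
  apply: le_trans (ereal_inf_img_lbound (fun f => ereal_sup ((d^~ y) @` f)) Fe) _.
  apply: ereal_sup_img_lub => x Mx; apply: le_trans (CF_dist_le phi x y) _.
  by rewrite addeC leeD2l.
- apply: ereal_inf_img_glb => f Ff; apply: ereal_sup_img_lub => g Fg.
  have [z [gz fz]] := ne _ (capF _ _ Fg Ff).
  apply: le_trans (ereal_inf_img_lbound _ gz) _; rewrite d_sym.
  exact: (ereal_sup_img_ubound (d^~ y) fz).
Qed.

Lemma dbarE (phi psi : CF d) : dbar phi psi = limm (sval psi) (M (sval phi)).
Proof. by rewrite /dbar; congr limm; apply: funext => y; apply: limp_dist_CF. Qed.

Lemma dbar_ge0 (phi psi : CF d) : 0 <= dbar phi psi.
Proof.
have [gpsi _ _] := CF_closed_wflat psi; have [gphi _ _] := CF_closed_wflat phi.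
by rewrite dbarE; apply: limm_ge0 => // x; apply: Mminus_ge0.
Qed.

Lemma dbar_le_Mminus (phi psi : CF d) y :
  dbar phi psi <= M (sval phi) y + M (sval psi) y.
Proof.
have [gpsi wpsi cpsi] := CF_closed_wflat psi; have [gphi _ _] := CF_closed_wflat phi.
rewrite dbarE; apply: ereal_sup_img_lub => g /cpsi[e e0 sg].
apply/lee_addgt0Pr => e' e'0.
have [z [Mz dyz]] := potential_approx y (potential_Mminus gpsi wpsi) e0 e'0.
apply: le_trans (ereal_inf_img_lbound _ (sg _ Mz)) _.
apply: le_trans (Mminus_lipschitz z y gphi) _; rewrite d_sym.
by rewrite addeC -addeA leeD2l.
Qed.

Lemma Mminus_le_dbar (phi psi : CF d) x :
  M (sval psi) x <= dbar phi psi + M (sval phi) x.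
Proof.
have [gpsi wpsi _] := CF_closed_wflat psi; have [gphi _ _] := CF_closed_wflat phi.
apply/lee_addgt0Pr => e e0; have Fe := weakly_flat_sublevel gpsi wpsi e0.
have : M (sval psi) x <= M (sval phi) x + e%:E +
    ereal_inf (M (sval phi) @` [set y | M (sval psi) y <= e%:E]).
  apply: lee_adde_ereal_inf_img => [|y _|y My].
  - by apply: adde_ge0; [apply: Mminus_ge0 | rewrite lee_fin ltW].
  - exact: Mminus_ge0.
  - apply: le_trans (Mminus_lipschitz x y gpsi) _.
    apply: le_trans (leeD (CF_dist_le phi x y) My) _.
    by rewrite addeAC.
move/le_trans; apply; rewrite addeC addeA leeD2r // leeD2r // dbarE.
exact: (ereal_sup_img_ubound (fun f => ereal_inf (M (sval phi) @` f)) Fe).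
Qed.

Section SequencePotential.
Variables (y : nat -> A) (T : nat -> R).
Hypothesis T_ge0 : forall n, (0 <= T n)%R.
Hypothesis T_small : forall eps : R, (0 < eps)%R ->
  exists N, forall k, (N <= k)%N -> (T k <= eps)%R.
Hypothesis y_cauchy : forall n k, (n <= k)%N -> d (y n) (y k) <= (T n)%:E.

(* The potential of the Cauchy filter generated by the sequence [y]. *)
Definition seq_potential z : \bar R :=
  ereal_inf [set d z (y n) + (T n)%:E | n in [set: nat]].

Let term_ge0 z n : 0 <= d z (y n) + (T n)%:E.
Proof. by rewrite adde_ge0 ?lee_fin. Qed.

Lemma seq_potential_ge0 z : 0 <= seq_potential z.
Proof. by apply: ereal_inf_img_glb => n _; apply: term_ge0. Qed.

Lemma seq_potential_le z n : seq_potential z <= d z (y n) + (T n)%:E.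
Proof. exact: ereal_inf_img_lbound. Qed.

Lemma seq_potential_y_le n : seq_potential (y n) <= (T n)%:E.
Proof. by rewrite (le_trans (seq_potential_le _ n)) // d_refl add0e. Qed.

Lemma potential_seq_potential : potential seq_potential.
Proof.
split=> [|z w|e e0|z e e0]; first exact: seq_potential_ge0.
- apply: lee_adde_ereal_inf_img => [//|n _|n _]; first exact: term_ge0.
  by apply: le_trans (seq_potential_le z n) _; rewrite addeA leeD2r.
- have [N small] := T_small e0; exists (y N).
  by rewrite (le_trans (seq_potential_y_le N)) // lee_fin small.
- have [n0 _ n0z] :=
    ereal_inf_img_approx (ex_intro _ 0%N I) (seq_potential_ge0 z) (lexx _) e0.
  have [N small] := T_small e0; exists (y (maxn n0 N)); split.
    by rewrite (le_trans (seq_potential_y_le _)) // lee_fin small // leq_maxr.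
  apply: le_trans n0z; apply: le_trans (d_tri _ (y n0) _) _.
  by rewrite leeD2l // y_cauchy // leq_maxl.
Qed.

Lemma seq_potential_dist_le z w : d z w <= seq_potential z + seq_potential w.
Proof.
apply: lee_adde_ereal_inf_img => [|n _|n _];
  [exact: seq_potential_ge0 | exact: term_ge0 |].
rewrite addeC; apply: lee_adde_ereal_inf_img => [|k _|k _]; try exact: term_ge0.
have dyy : d (y k) (y n) <= (T k + T n)%R%:E.
  have [kn|nk] := leqP k n.
    by rewrite (le_trans (y_cauchy kn)) // lee_fin lerDl.
  by rewrite d_sym (le_trans (y_cauchy (ltnW nk))) // lee_fin lerDr.
apply: le_trans (d_tri z (y k) w) _.
apply: le_trans (leeD2l _ (d_tri (y k) (y n) w)) _.
apply: le_trans (leeD2l _ (leeD2r _ dyy)) _.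
rewrite (d_sym (y n) w) EFinD; set a := d z (y k); set b := d w (y n).
by rewrite [X in _ <= X]addeC -!addeA (addeC b).
Qed.

End SequencePotential.

(* Steps of size [e / 2 ^+ n.+3] keep every tail of the chain below [e / 2 ^+ n.+1]. *)
Lemma potential_cauchy_seq m x (e : R) : potential m -> (0 < e)%R ->
  exists y : nat -> A, [/\ d x (y 0%N) <= m x + (e / 2 ^+ 3)%:E,
    forall n, m (y n) <= (e / 2 ^+ n.+1)%:E &
    forall n k, (n <= k)%N -> d (y n) (y k) <= (e / 2 ^+ n.+1)%:E].
Proof.
move=> pm e0; pose g n := (e / 2 ^+ n)%R.
have g_gt0 n : (0 < g n)%R by rewrite divr_gt0 ?exprn_gt0.
have gS n : g n.+1 = (g n / 2)%R by rewrite /g exprS invfM mulrA mulrAC.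
have [f hf] := choice (fun p : A * nat =>
  potential_approx p.1 pm (g_gt0 p.2.+3) (g_gt0 p.2.+3)).
pose y := fix y n := if n is k.+1 then f (y k, n) else f (x, 0%N).
have my n : m (y n) <= (g n.+3)%:E.
  by case: n => [|n]; [case: (hf (x, 0%N)) | case: (hf (y n, n.+1))].
have step n : d (y n) (y n.+1) <= (g n.+1 - g n.+2)%R%:E.
  have [_ /= dyy] := hf (y n, n.+1); apply: le_trans dyy _.
  apply: le_trans (leeD2r _ (my n)) _.
  by rewrite -EFinD lee_fin !gS; have := g_gt0 n; lra.
have chain n j : d (y n) (y (n + j)%N) <= (g n.+1 - g (n + j).+1)%R%:E.
  elim: j => [|j IH]; first by rewrite addn0 d_refl subrr.
  rewrite addnS; apply: le_trans (d_tri _ (y (n + j)%N) _) _.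
  by apply: le_trans (leeD IH (step _)) _; rewrite -EFinD lee_fin; lra.
exists y; split.
- by have [] := hf (x, 0%N).
- move=> n; rewrite (le_trans (my n)) // lee_fin -/(g n.+1) !gS.
  by have := g_gt0 n; lra.
- move=> n k /subnKC <-; rewrite (le_trans (chain n (k - n)%N)) // lee_fin.
  by rewrite lerBlDr lerDl ltW.
Qed.

Lemma cauchy_refinement F x (e : R) : closed_wflat F -> (0 < e)%R ->
  exists phi : CF d, (forall y, M F y <= M (sval phi) y) /\
                     M (sval phi) x <= M F x + e%:E.
Proof.
move=> [gF wF _] e0; have pm := potential_Mminus gF wF; have [_ mL _ _] := pm.
have [y [dxy0 my y_cauchy]] := potential_cauchy_seq x pm e0.
pose T n := (e / 2 ^+ n.+1)%R.
have T_ge0 n : (0 <= T n)%R by rewrite divr_ge0 ?exprn_ge0 ?ltW.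
have T_small eps : (0 < eps)%R -> exists N, forall k, (N <= k)%N -> (T k <= eps)%R.
  by move=> /(geometric_eventually_le e0)[N small]; exists N => k /leqW /small.
have pm' := potential_seq_potential T_ge0 T_small y_cauchy.
set G := sublevel_filter (seq_potential y T).
have GP : [/\ gfilter G, Defs.cauchy d G & closed_filter d G].
  have [gG _ cG] := sublevel_filter_closed_wflat pm'; split=> //.
  by apply: sublevel_filter_cauchy => // z w; apply: seq_potential_dist_le.
pose phi : CF d := exist _ _ GP.
exists phi; split=> [z|]; rewrite /= Mminus_sublevel_filter //.
- apply: ereal_inf_img_glb => n _; apply: le_trans (mL z (y n)) _.
  by rewrite leeD2l.
- apply: le_trans (seq_potential_le _ _ x 0%N) _; apply: le_trans (leeD2r _ dxy0) _.
  by rewrite -addeA leeD2l // -EFinD lee_fin /T !exprS expr0 !mulr1; lra.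
Qed.

Definition inf_Mminus (X : set (CF d)) x : \bar R :=
  ereal_inf [set M (sval phi) x | phi in X].

Lemma CF_Mminus_ge0 (phi : CF d) x : 0 <= M (sval phi) x.
Proof. by have [gphi _ _] := CF_closed_wflat phi; apply: Mminus_ge0. Qed.

Lemma potential_CF_Mminus (phi : CF d) : potential (M (sval phi)).
Proof. by have [gphi wphi _] := CF_closed_wflat phi; apply: potential_Mminus. Qed.

Lemma potential_inf_Mminus X : X !=set0 -> potential (inf_Mminus X).
Proof.
move=> [phi0 Xphi0].
have m0 x : 0 <= inf_Mminus X x.
  by apply: ereal_inf_img_glb => phi _; apply: CF_Mminus_ge0.
split=> [//|x y|e e0|x e e0].
- apply: lee_adde_ereal_inf_img => // phi Xphi; first exact: CF_Mminus_ge0.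
  apply: le_trans (ereal_inf_img_lbound _ Xphi) _.
  by have [gphi _ _] := CF_closed_wflat phi; apply: Mminus_lipschitz.
- have [_ _ small _] := potential_CF_Mminus phi0; have [y My] := small e e0.
  by exists y; apply: le_trans My; apply: ereal_inf_img_lbound.
- have e20 : (0 < e / 2)%R by rewrite divr_gt0.
  have [phi Xphi Mphix] :=
    ereal_inf_img_approx (ex_intro _ _ Xphi0) (m0 x) (lexx _) e20.
  have [y [My dxy]] := potential_approx x (potential_CF_Mminus phi) e0 e20.
  exists y; split; first by apply: le_trans My; apply: ereal_inf_img_lbound.
  apply: le_trans dxy _; apply: le_trans (leeD2r _ Mphix) _.
  by rewrite -addeA -EFinD -splitr.
Qed.

Definition refinements F : set (CF d) := [set phi | F `<=` sval phi].

Lemma refinementsP F (phi : CF d) : closed_wflat F ->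
  refinements F phi <-> forall x, M F x <= M (sval phi) x.
Proof. by move=> cF; apply: subset_MminusP (CF_closed_wflat phi). Qed.

Lemma refinements_neq0 F : closed_wflat F -> refinements F !=set0.
Proof.
move=> cF; have [gF wF _] := cF; have [_ _ small _] := potential_Mminus gF wF.
have [x _] := small 1%R ltr01; have [phi [MF _]] := cauchy_refinement x cF ltr01.
by exists phi; apply/refinementsP.
Qed.

Lemma dbar_closed_refinements F : closed_wflat F -> dbar_closed (refinements F).
Proof.
move=> cF phi near_phi; apply/refinementsP => // x; apply/lee_addgt0Pr => e e0.
have [psi /(refinementsP _ cF) MFpsi dphipsi] := near_phi e e0.
apply: le_trans (MFpsi x) _; apply: le_trans (Mminus_le_dbar phi psi x) _.
by rewrite addeC leeD2l // ltW.
Qed.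

Lemma inf_Mminus_refinements F : closed_wflat F -> inf_Mminus (refinements F) = M F.
Proof.
move=> cF; apply/funext => x; apply/eqP; rewrite eq_le; apply/andP; split.
- apply/lee_addgt0Pr => e e0; have [phi [MFphi Mphix]] := cauchy_refinement x cF e0.
  apply: le_trans Mphix; apply: ereal_inf_img_lbound.
  exact/refinementsP.
- by apply: ereal_inf_img_glb => phi /(refinementsP _ cF); apply.
Qed.

Lemma refinements_sublevel_inf X : X !=set0 -> dbar_closed X ->
  refinements (sublevel_filter (inf_Mminus X)) = X.
Proof.
move=> Xne Xcl; have pm := potential_inf_Mminus Xne.
have cG := sublevel_filter_closed_wflat pm.
apply/seteqP; split=> phi /=; last first.
  move=> Xphi; apply/refinementsP => // x.
  by rewrite Mminus_sublevel_filter //; apply: ereal_inf_img_lbound.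
move/(refinementsP _ cG) => Mphi; apply: Xcl => e e0.
have e40 : (0 < e / 4)%R by rewrite divr_gt0.
have [_ _ small _] := potential_CF_Mminus phi; have [x Mphix] := small _ e40.
have mx : inf_Mminus X x <= (e / 4)%:E.
  by rewrite -(Mminus_sublevel_filter _ pm) (le_trans (Mphi x)).
have e4_ge0 : 0 <= (e / 4)%:E by rewrite lee_fin ltW.
have [psi Xpsi Mpsix] := ereal_inf_img_approx Xne e4_ge0 mx e40.
exists psi => //; apply: le_lt_trans (dbar_le_Mminus phi psi x) _.
apply: le_lt_trans (leeD Mphix Mpsix) _.
by rewrite -!EFinD lte_fin; lra.
Qed.

Definition hausdorff_excess (X Y : set (CF d)) : \bar R :=
  ereal_sup [set ereal_inf [set dbar phi psi | psi in Y] | phi in X].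

Lemma refinement_meets F (phi : CF d) f (e : R) : closed_wflat F ->
  refinements F phi -> F f -> (0 < e)%R -> exists2 x, f x & M (sval phi) x <= e%:E.
Proof.
move=> cF Fphi Ff e0; have [_ _ clF] := cF; have [e' e'0 sf] := clF f Ff.
have [_ _ small _] := potential_CF_Mminus phi.
have [|x Mx] := small (Num.min e e'); first by rewrite lt_min e0 e'0.
exists x; last by rewrite (le_trans Mx) // lee_fin ge_min lexx.
apply: sf; rewrite /= (le_trans ((refinementsP _ cF).1 Fphi x)) //.
by rewrite (le_trans Mx) // lee_fin ge_min lexx orbT.
Qed.

Lemma hausdorff_excess_refinements_le F G : closed_wflat F -> closed_wflat G ->
  hausdorff_excess (refinements F) (refinements G) <= limp F (M G).
Proof.
move=> cF cG; have [gF _ _] := cF; have [gG _ _] := cG; have [Fne _ _ _] := gF.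
apply: ereal_sup_img_lub => phi Fphi; apply/lee_addgt0Pr => e e0.
have e30 : (0 < e / 3)%R by rewrite divr_gt0.
have L0 := limp_ge0 gF (fun x => Mminus_ge0 x gG).
have [f Ff supf] :=
  @ereal_inf_img_approx _ _ F (fun f => ereal_sup (M G @` f)) _ _ Fne L0 (lexx _) e30.
have [x fx Mphix] := refinement_meets cF Fphi Ff e30.
have MGx := le_trans (ereal_sup_img_ubound _ fx) supf.
have [psi [MGpsi Mpsix]] := cauchy_refinement x cG e30.
have Gpsi : refinements G psi by apply/refinementsP.
apply: le_trans (ereal_inf_img_lbound (dbar phi) Gpsi) _.
apply: le_trans (dbar_le_Mminus phi psi x) _.
apply: le_trans (leeD Mphix (le_trans Mpsix (leeD2r _ MGx))) _.
by rewrite addeCA -addeA -!EFinD leeD2l // lee_fin; lra.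
Qed.

Lemma hausdorff_excess_refinements_ge F G : closed_wflat F -> closed_wflat G ->
  limp F (M G) <= hausdorff_excess (refinements F) (refinements G).
Proof.
move=> cF cG; have [gF wF _] := cF; apply/lee_addgt0Pr => e e0.
have e20 : (0 < e / 2)%R by rewrite divr_gt0.
have Fe := weakly_flat_sublevel gF wF e20.
apply: le_trans (ereal_inf_img_lbound (fun f => ereal_sup (M G @` f)) Fe) _.
apply: ereal_sup_img_lub => x MFx.
have [phi [MFphi Mphix]] := cauchy_refinement x cF e20.
have Fphi : refinements F phi by apply/refinementsP.
have : M G x <= M (sval phi) x + ereal_inf [set dbar phi psi | psi in refinements G].
  apply: lee_adde_ereal_inf_img => [|psi _|psi Gpsi].
  - exact: CF_Mminus_ge0.
  - exact: dbar_ge0.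
  - rewrite addeC; apply: le_trans (Mminus_le_dbar phi psi x).
    exact: (refinementsP _ cG).1 Gpsi x.
move/le_trans; apply; rewrite addeC; apply: leeD.
  exact: (ereal_sup_img_ubound
            (fun phi => ereal_inf [set dbar phi psi | psi in refinements G]) Fphi).
apply: le_trans Mphix _; apply: le_trans (leeD2r _ MFx) _.
by rewrite -EFinD -splitr.
Qed.

Lemma hausdorff_excess_refinements F G : closed_wflat F -> closed_wflat G ->
  hausdorff_excess (refinements F) (refinements G) = limp F (M G).
Proof.
move=> cF cG; apply/eqP; rewrite eq_le.
by rewrite hausdorff_excess_refinements_le ?hausdorff_excess_refinements_ge.
Qed.

End Potentials.

Arguments refinements {R A} d F.

Theorem mainTheorem18 (R : realType) (A : Type) (d : A -> A -> \bar R)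
  (d_ge0 : forall x y, 0 <= d x y)
  (d_refl : forall x, d x x = 0)
  (d_tri : forall x y z, d x z <= d x y + d y z)
  (d_sym : forall x y, d x y = d y x) :
  exists h : P1pt d -> ClSet d,
    [/\ bijective h,
        (forall F G, dCl (h F) (h G) = dP1 F G) &
        (forall F, sval (h F) = [set phi : CF d | sval F `<=` sval phi])].
Proof.
have refP (F : P1pt d) :
    refinements d (sval F) !=set0 /\ dbar_closed (refinements d (sval F)).
  by case: F => F cF; split; [apply: refinements_neq0 | apply: dbar_closed_refinements].
have infP (X : ClSet d) : closed_wflat d (sublevel_filter (inf_Mminus (sval X))).
  by apply/sublevel_filter_closed_wflat/potential_inf_Mminus => //; case: (svalP X).
pose h (F : P1pt d) : ClSet d := exist _ _ (refP F).
pose g (X : ClSet d) : P1pt d := exist _ _ (infP X).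
exists h; split=> //.
- exists g => [[F cF]|[X [Xne Xcl]]]; apply: eq_exist => /=.
    by rewrite inf_Mminus_refinements // sublevel_filter_Mminus.
  exact: refinements_sublevel_inf.
- by move=> [F cF] [G cG]; apply: hausdorff_excess_refinements.
Qed.
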